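(* Let $P$ be a $d$-dimensional convex polytope and let $O$ be an acyclic orientation of its graph $G_P$. Then $$f^O \;\geq\; \sum_{v \in V_P} \bigl|\{F \text{ a nonempty face of } P : v \text{ is a sink of } G_F \text{ with respect to } O\}\bigr| \;\geq\; \sum_{i=0}^d f_i(P),$$ where $f_i(P)$ is the number of $i$-dimensional faces of $P$.
   Context: The graph $G_P=(V_P,E_P)$ of a polytope $P$ has vertex set the vertices of $P$, with $v_i,v_j$ adjacent iff some $1$-dimensional face of $P$ contains both. For a face $F$, $G_F$ is the graph of $F$ (a subgraph of $G_P$), oriented by restricting $O$. For an orientation $O$ of a graph $G=(V,E)$, $f^O:=\sum_{v\in V}2^{\operatorname{indeg}(v)}$, where $\operatorname{indeg}$ is the in-degree with respect to $O$. A sink of a graph with respect to an orientation is a vertex all of whose incident edges are oriented towards it. *)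

From HB Require Import structures.
From mathcomp Require Import all_boot all_order all_algebra.
From mathcomp Require Import boolp.
Set Implicit Arguments. Unset Strict Implicit. Unset Printing Implicit Defensive.
Import Order.TTheory GRing.Theory Num.Theory.

Local Open Scope ring_scope.

(* A polytope P = conv { p t | t : T } in R^n, where T is a finite index type
   of its vertices (p injective, every p t a vertex).  A face of P is
   determined by its vertex set; U : {set T} is the vertex set of a face iff
   U = { t | c . p t = b } for some valid inequality c . x <= b of P
   (c = 0, b = 0 gives P itself; c = 0, b = 1 the empty face). *)

Section Polytope.
Variables (R : realFieldType) (n : nat) (T : finType) (p : T -> 'rV[R]_n).

Definition dotp (c x : 'rV[R]_n) : R := \sum_(i < n) c 0 i * x 0 i.

Definition is_face (U : {set T}) : Prop :=
  exists (c : 'rV[R]_n) (b : R),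
    (forall t, dotp c (p t) <= b) /\ (forall t, (t \in U) = (dotp c (p t) == b)).

Definition is_faceb (U : {set T}) : bool := `[< is_face U >].

(* rank of the homogenized vertex vectors (p t, 1), t in U;
   the affine dimension of the face with vertex set U is hrank U - 1. *)
Definition hrank (U : {set T}) : nat :=
  \rank (\matrix_(i < #|T|)
           (if enum_val i \in U then row_mx (p (enum_val i)) (const_mx 1 : 'rV[R]_1)
            else 0)).

Definition face_dim (U : {set T}) : nat := (hrank U).-1.

Definition adj (u v : T) : bool :=
  (u != v) && `[< exists U : {set T}, [/\ is_face U, face_dim U = 1%N, u \in U & v \in U] >].

Definition f_num (i : nat) : nat :=
  #|[set U : {set T} | [&& is_faceb U, U != set0 & face_dim U == i]]|.

End Polytope.

Section Orientation.
Variables (R : realFieldType) (n : nat) (T : finType) (p : T -> 'rV[R]_n).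

(* o u v means the edge {u,v} is oriented from u to v *)
Definition orientation (o : rel T) : Prop :=
  (forall u v, o u v -> adj p u v) /\ (forall u v, adj p u v -> o u v (+) o v u).

Definition acyclic_or (o : rel T) : Prop := forall u v, o u v -> ~~ connect o v u.

Definition indeg (o : rel T) (v : T) : nat := #|[set u | o u v]|.

Definition fO (o : rel T) : nat := (\sum_(v : T) 2 ^ indeg o v)%N.

(* v is a sink of G_F (F the face with vertex set U): v is a vertex of F and
   every edge of G_F (edge of G_P with both ends in F) at v points to v *)
Definition sinkb (o : rel T) (U : {set T}) (v : T) : bool :=
  (v \in U) && [forall u, ((u \in U) && adj p u v) ==> o u v].

Definition sink_count (o : rel T) (v : T) : nat :=
  #|[set U : {set T} | is_faceb p U && sinkb o U v]|.

End Orientation.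

From HB Require Import structures.
From mathcomp Require Import all_boot all_order all_algebra.
From mathcomp Require Import boolp.
From mathcomp Require Import ring lra zify.
Set Implicit Arguments. Unset Strict Implicit. Unset Printing Implicit Defensive.
Import Order.TTheory GRing.Theory Num.Theory.
Local Open Scope ring_scope.

(* Fix a vertex v. A face F in which v is a sink is determined by the set of
   in-neighbours of v inside F: if z is a vertex of F outside another such face
   F', the linear functional exposing F' is smaller at z than at v, so, as in the
   simplex method, it already decreases along some edge of F at v. That edge
   leaves F' and, v being a sink of F, is oriented into v. Hence v is a sink of
   at most 2^indeg(v) faces.
   Conversely every nonempty face has a sink since O is acyclic, and each face has
   a single dimension, which gives the second inequality.

   The improving edge is found by tilting the hyperplane that supports P at v
   alone towards the improving direction: it first meets P in a face through v
   whose other vertices are all better than v, and any edge of that face at v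
   (one exists, by induction on the number of vertices) is an edge of P. *)

Section FiniteFamilies.
Variables (R : realFieldType) (I : finType) (A : {set I}).

Lemma exists_scale_dominating (x y : I -> R) :
  (forall i, i \in A -> 0 < y i) ->
  exists2 l, 0 <= l & forall i, i \in A -> x i < l * y i.
Proof.
move=> y_gt0; have ratio_ge0 i : i \in A -> 0 <= `|x i| / y i.
  by move=> /y_gt0 yi; rewrite divr_ge0 // ltW.
exists (\sum_(i in A) `|x i| / y i + 1).
  by rewrite addr_ge0 // sumr_ge0.
move=> i iA; rewrite -ltr_pdivrMr ?y_gt0 //.
apply: (le_lt_trans (y := `|x i| / y i)).
  by rewrite ler_pM2r ?invr_gt0 ?y_gt0 ?ler_norm.
rewrite (bigD1 i) //= -addrA ltrDl ltr_wpDl //.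
by rewrite sumr_ge0 // => j /andP[/ratio_ge0].
Qed.

Lemma exists_tilt (alpha gamma : I -> R) w :
  (forall i, i \in A -> alpha i < 0) -> w \in A -> 0 < gamma w ->
  exists2 r, 0 < r &
    (forall i, i \in A -> gamma i + r * alpha i <= 0) /\
    exists2 u, u \in A & gamma u + r * alpha u = 0.
Proof.
move=> alpha_lt0 wA gamma_w.
pose ratio i := gamma i / - alpha i.
case: (arg_maxP ratio wA) => u uA ratio_max.
have ratio_w : 0 < ratio w by rewrite divr_gt0 // oppr_gt0 alpha_lt0.
set r := ratio u.
exists r; first exact: lt_le_trans ratio_w (ratio_max w wA).
have tilt_eq i : i \in A -> gamma i + r * alpha i = - alpha i * (ratio i - r).
  by move=> /alpha_lt0 ai; rewrite /ratio; field; rewrite lt_eqF.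
split => [i iA | ]; last by exists u; rewrite // tilt_eq // /r subrr mulr0.
by rewrite tilt_eq // pmulr_rle0 ?oppr_gt0 ?alpha_lt0 // subr_le0; exact: ratio_max.
Qed.

End FiniteFamilies.

Lemma card_bigcup_le (I U : finType) (F : I -> {set U}) :
  (#|\bigcup_i F i| <= \sum_i #|F i|)%N.
Proof.
elim/big_ind2: _ => // [|m A k B le_Am le_Bk]; first by rewrite cards0.
by rewrite (leq_trans (leq_card_setU A B)) // leq_add.
Qed.

Lemma acyclic_exists_terminal (T : finType) (e : rel T) (U : {set T}) x :
  acyclic_or e -> x \in U -> exists2 v, v \in U & {in U, forall u, ~~ e v u}.
Proof.
move=> acyc xU; pose reach y := #|[set z | connect e y z]|.
case: (arg_minnP reach xU) => v vU reach_min; exists v => // u uU; apply/negP => e_vu.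
have : [set z | connect e u z] \proper [set z | connect e v z].
  rewrite properE; apply/andP; split.
    by apply/subsetP => z; rewrite !inE; apply: connect_trans; apply: connect1.
  by apply/subsetPn; exists v; rewrite inE ?connect0 ?acyc.
by move/proper_card; rewrite ltnNge reach_min.
Qed.

Section ExposedSets.
Variables (R : realFieldType) (n : nat) (T : finType) (p : T -> 'rV[R]_n).

Lemma dotpDl (c1 c2 x : 'rV[R]_n) : dotp (c1 + c2) x = dotp c1 x + dotp c2 x.
Proof. by rewrite /dotp -big_split; apply: eq_bigr => i _; rewrite mxE mulrDl. Qed.

Lemma dotpZl l (c x : 'rV[R]_n) : dotp (l *: c) x = l * dotp c x.
Proof. by rewrite /dotp mulr_sumr; apply: eq_bigr => i _; rewrite mxE mulrA. Qed.

Lemma dotpNl (c x : 'rV[R]_n) : dotp (- c) x = - dotp c x.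
Proof. by rewrite -scaleN1r dotpZl mulN1r. Qed.

Lemma dotp0l (x : 'rV[R]_n) : dotp 0 x = 0.
Proof. by rewrite -(scale0r 0) dotpZl mul0r. Qed.

(* U is the vertex set of a face of conv (p @: S). *)
Definition exposed (S U : {set T}) : Prop :=
  U \subset S /\ exists (c : 'rV[R]_n) (b : R),
    (forall t, t \in S -> dotp c (p t) <= b) /\
    (forall t, t \in S -> (t \in U) = (dotp c (p t) == b)).

Definition level (S : {set T}) (c : 'rV[R]_n) (v : T) : {set T} :=
  [set x in S | dotp c (p x) == dotp c (p v)].

Lemma mem_level (S : {set T}) c v x :
  (x \in level S c v) = (x \in S) && (dotp c (p x) == dotp c (p v)).
Proof. by rewrite inE. Qed.

Lemma is_face_exposed (U : {set T}) : is_face p U <-> exposed setT U.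
Proof.
split=> [[c [b [le_b eqU]]] | [_ [c [b [le_b eqU]]]]].
  by split; [exact: subsetT | exists c, b; split=> t _; [exact: le_b | exact: eqU]].
by exists c, b; split=> t; [exact: le_b | exact: eqU].
Qed.

Lemma exposed_sub (S U : {set T}) : exposed S U -> U \subset S.
Proof. by case. Qed.

Lemma exposed_refl (S : {set T}) : exposed S S.
Proof. by split=> //; exists 0, 0; split=> t tS; rewrite dotp0l ?lexx ?eqxx ?tS. Qed.

Lemma exposed_level (S : {set T}) c v : v \in S ->
  (forall x, x \in S -> dotp c (p x) <= dotp c (p v)) -> exposed S (level S c v).
Proof.
move=> vS c_max; split; first by apply/subsetP => x; rewrite inE => /andP[].
by exists c, (dotp c (p v)); split=> // t tS; rewrite inE tS.
Qed.

(* Tilt the functional exposing F by a large multiple of the one exposing S. *)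
Lemma exposed_trans (S F U : {set T}) : exposed S F -> exposed F U -> exposed S U.
Proof.
move=> [sFS [c1 [b1 [le_b1 eqF]]]] [sUF [c2 [b2 [le_b2 eqU]]]].
have gap_gt0 t : t \in S :\: F -> 0 < b1 - dotp c1 (p t).
  by case/setDP=> tS tF; rewrite subr_gt0 lt_neqAle le_b1 // andbT -eqF.
have [l l_ge0 dom] := exists_scale_dominating (fun t => dotp c2 (p t) - b2) gap_gt0.
split; first exact: subset_trans sUF sFS.
exists (c2 + l *: c1), (b2 + l * b1); split=> t tS; rewrite dotpDl dotpZl.
all: have [tF | tF] := boolP (t \in F).
- by move: (eqF t tS); rewrite tF => /esym/eqP ->; rewrite lerD2r le_b2.
- by have := dom t; rewrite inE tF tS => /(_ isT) /ltW; lra.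
- by move: (eqF t tS); rewrite tF eqU // => /esym/eqP ->; apply/eqP/eqP; lra.
- have tU : t \notin U by apply: contraNN tF => /(subsetP sUF).
  have := dom t; rewrite inE tF tS (negbTE tU) => /(_ isT) lt_t.
  by apply/esym/negbTE; rewrite lt_eqF //; lra.
Qed.

Hypothesis hvert : forall t : T, is_face p [set t].

Lemma vertex_separation t : exists a, forall x, x != t -> dotp a (p x) < dotp a (p t).
Proof.
have [a [b [le_b eq_t]]] := hvert t; exists a => x xt.
have -> : dotp a (p t) = b by apply/eqP; rewrite -eq_t set11.
by rewrite lt_neqAle le_b andbT -eq_t inE.
Qed.

Lemma exists_tilted_face (S : {set T}) v (a c : 'rV[R]_n) w :
  v \in S -> (forall x, x != v -> dotp a (p x) < dotp a (p v)) ->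
  w \in S -> dotp c (p v) < dotp c (p w) ->
  exists2 r, 0 < r & exposed S (level S (c + r *: a) v) /\
    exists2 u, u \in level S (c + r *: a) v & u != v.
Proof.
move=> vS a_max wS c_vw; have wv : w != v by apply: contraTneq c_vw => ->; rewrite ltxx.
have [|||r r_gt0 [r_max [u uSv r_u]]] :=
  @exists_tilt R T (S :\ v) (fun x => dotp a (p x) - dotp a (p v))
    (fun x => dotp c (p x) - dotp c (p v)) w.
- by move=> x /setD1P[xv _]; rewrite subr_lt0 a_max.
- by rewrite !inE wv.
- by rewrite subr_gt0.
move: uSv => /setD1P[uv uS].
exists r => //; split.
  apply: exposed_level => // x xS; rewrite !dotpDl !dotpZl.
  have [-> // | xv] := eqVneq x v.
  by have := r_max x; rewrite !inE xv xS => /(_ isT); lra.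
by exists u => //; rewrite mem_level uS !dotpDl !dotpZl; apply/eqP; lra.
Qed.

Lemma exists_edge (S : {set T}) v : (1 < #|S|)%N -> v \in S ->
  exists2 u, u != v & exposed S [set v; u].
Proof.
have [k] := ubnP #|S|; elim: k S => // k IH S ltSk S_gt1 vS.
have [x xSv] : exists x, x \in S :\ v.
  by apply/card_gt0P; move: S_gt1; rewrite (cardsD1 v S) vS.
have /setD1P[xv xS] := xSv.
have [S2 | S_ne2] := eqVneq #|S| 2.
  exists x => //; suff -> : S = [set v; x] by apply: exposed_refl.
  apply/esym/eqP; rewrite eqEcard S2 cards2 eq_sym xv andbT.
  by apply/subsetP => z /set2P[] ->.
have [a a_max] := vertex_separation v.
have [z [u1 [zS u1S u1v zu1 le_zu1]]] : exists z u1, [/\ z \in S, u1 \in S,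
    u1 != v, z != u1 & dotp a (p z) <= dotp a (p u1)].
  have /card_gt1P[y [y' [yS y'S yy']]] : (1 < #|S :\ v|)%N.
    by move: S_gt1 S_ne2; rewrite (cardsD1 v S) vS; lia.
  move: yS y'S => /setD1P[yv yS] /setD1P[y'v y'S].
  have [le_yy' | /ltW le_y'y] := leP (dotp a (p y)) (dotp a (p y')).
    by exists y, y'; split.
  by exists y', y; split; rewrite // eq_sym.
have [c c_max] := vertex_separation u1.
have vu1 : v != u1 by rewrite eq_sym.
have [r r_gt0 [exF [u uF uv]]] := exists_tilted_face vS a_max u1S (c_max v vu1).
set F := level S _ v in exF uF.
have vF : v \in F by rewrite mem_level vS eqxx.
have F_gt1 : (1 < #|F|)%N by apply/card_gt1P; exists u, v.
have ltFS : (#|F| < #|S|)%N.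
  rewrite proper_card // properEneq exposed_sub // andbT.
  apply/eqP => FS; have := c_max z zu1; have := ler_wpM2l (ltW r_gt0) le_zu1.
  move: zS u1S; rewrite -FS /F !mem_level !dotpDl !dotpZl.
  by move=> /andP[_ /eqP ? ] /andP[_ /eqP ? ]; lra.
have [u' u'v exF'] := IH F (leq_trans ltFS ltSk) F_gt1 vF.
by exists u' => //; apply: exposed_trans exF exF'.
Qed.

Lemma exists_improving_edge (S : {set T}) v (c : 'rV[R]_n) w :
  v \in S -> w \in S -> dotp c (p v) < dotp c (p w) ->
  exists u, [/\ u != v, exposed S [set v; u] & dotp c (p v) < dotp c (p u)].
Proof.
move=> vS wS c_vw; have [a a_max] := vertex_separation v.
have [r r_gt0 [exF [u uF uv]]] := exists_tilted_face vS a_max wS c_vw.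
set F := level S _ v in exF uF.
have vF : v \in F by rewrite mem_level vS eqxx.
have [|u' u'v exF'] := exists_edge (S := F) _ vF; first by apply/card_gt1P; exists u, v.
exists u'; split=> //; first exact: exposed_trans exF exF'.
have /(subsetP (exposed_sub exF')) : u' \in [set v; u'] by rewrite !inE eqxx orbT.
rewrite mem_level !dotpDl !dotpZl => /andP[_ /eqP].
by have := a_max u' u'v; rewrite -(ltr_pM2l r_gt0); lra.
Qed.

End ExposedSets.

Section Edges.
Variables (R : realFieldType) (n : nat) (T : finType) (p : T -> 'rV[R]_n).
Hypothesis hinj : injective p.

Definition hvec (t : T) : 'rV[R]_(n + 1) := row_mx (p t) (const_mx 1).

Lemma hvec_last t : hvec t 0 (rshift n 0) = 1.
Proof. by rewrite row_mxEr mxE. Qed.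

Lemma rank_hvec_pair u v : u != v -> \rank (hvec v + hvec u)%MS = 2%N.
Proof.
move=> uv; have rank_v : \rank (hvec v) = 1%N.
  rewrite rank_rV; case: eqP => [/rowP /(_ (rshift n 0))|//].
  by rewrite hvec_last mxE => /eqP; rewrite oner_eq0.
have le2 : (\rank (hvec v + hvec u)%MS <= 2)%N by rewrite addsmxE rank_leq_row.
suff : (\rank (hvec v) < \rank (hvec v + hvec u)%MS)%N.
  by rewrite rank_v => gt1; apply/eqP; rewrite eqn_leq le2.
rewrite ltn_neqAle (mxrankS (addsmxSl _ _)) andbT (mxrank_leqif_sup (addsmxSl _ _)).
rewrite addsmx_sub submx_refl /=.
apply/negP => /sub_rVP[k eq_uv].
have k1 : k = 1.
  by have := hvec_last u; rewrite eq_uv mxE hvec_last mulr1.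
move: eq_uv; rewrite k1 scale1r => /eq_row_mx[/hinj eq_pu _].
by rewrite eq_pu eqxx in uv.
Qed.

Lemma hrank_pair u v : u != v -> hrank p [set v; u] = 2%N.
Proof.
move=> uv; rewrite -(rank_hvec_pair uv); apply/eqmx_rank/andP; split.
  apply/row_subP => i; rewrite rowK; case: ifP => [|_]; last exact: sub0mx.
  by case/set2P => ->; [exact: addsmxSl | exact: addsmxSr].
rewrite addsmx_sub; apply/andP; split.
  by apply: (eq_row_sub (enum_rank v)); rewrite rowK enum_rankK set21.
by apply: (eq_row_sub (enum_rank u)); rewrite rowK enum_rankK set22.
Qed.

Lemma adj_of_pair_face u v : u != v -> is_face p [set v; u] -> adj p u v.
Proof.
move=> uv face_uv; rewrite /adj uv; apply/asboolP.
by exists [set v; u]; split; rewrite ?set21 ?set22 // /face_dim hrank_pair.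
Qed.

End Edges.

Section Sinks.
Variables (R : realFieldType) (n : nat) (T : finType) (p : T -> 'rV[R]_n) (o : rel T).
Hypotheses (hinj : injective p) (hvert : forall t : T, is_face p [set t]).

Lemma sink_face_subset (U U' : {set T}) v :
  is_face p U -> sinkb p o U v -> is_face p U' -> v \in U' ->
  U :&: [set u | o u v] \subset U' -> U \subset U'.
Proof.
move=> faceU /andP[vU /forallP sinkU] [c [b [le_b eqU']]] vU' sub_in.
apply/subsetP => z zU; apply: contraT => zU'.
have c_v : dotp c (p v) = b by apply/eqP; rewrite -eqU'.
have lt_vz : dotp (- c) (p v) < dotp (- c) (p z).
  by rewrite !dotpNl ltrN2 c_v lt_neqAle le_b andbT -eqU'.
have [u [uv ex_uv lt_vu]] := exists_improving_edge hvert vU zU lt_vz.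
have face_uv : is_face p [set v; u].
  by apply/is_face_exposed; apply: exposed_trans ex_uv; apply/is_face_exposed.
have uU : u \in U by apply: (subsetP (exposed_sub ex_uv)); rewrite set22.
have o_uv : o u v by have := sinkU u; rewrite uU adj_of_pair_face.
have /(subsetP sub_in) : u \in U :&: [set u | o u v] by rewrite !inE uU o_uv.
by rewrite eqU' => /eqP c_u; move: lt_vu; rewrite !dotpNl c_v c_u ltxx.
Qed.

Lemma sink_count_le v : (sink_count p o v <= 2 ^ indeg o v)%N.
Proof.
rewrite /sink_count /indeg -card_powerset.
pose in_nbrs (U : {set T}) := U :&: [set u | o u v].
have inj : {in [set U | is_faceb p U && sinkb p o U v] &, injective in_nbrs}.
  move=> U U'; rewrite !inE => /andP[/asboolP fU sU] /andP[/asboolP fU' sU'] eqUU'.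
  have sub_UU' : in_nbrs U \subset U' by rewrite eqUU' subsetIl.
  have sub_U'U : in_nbrs U' \subset U by rewrite -eqUU' subsetIl.
  have [vU _] := andP sU; have [vU' _] := andP sU'.
  apply/eqP; rewrite eqEsubset.
  by rewrite (sink_face_subset fU sU fU' vU' sub_UU') (sink_face_subset fU' sU' fU vU sub_U'U).
rewrite -(card_in_imset inj) subset_leq_card //.
by apply/subsetP => _ /imsetP[U _ ->]; rewrite inE subsetIr.
Qed.

Lemma exists_sink (U : {set T}) :
  orientation p o -> acyclic_or o -> U != set0 -> exists v, sinkb p o U v.
Proof.
move=> [_ or_adj] acyc /set0Pn[x xU].
have [v vU v_term] := acyclic_exists_terminal acyc xU.
exists v; rewrite /sinkb vU; apply/forallP => u; apply/implyP => /andP[uU adj_uv].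
by have := or_adj u v adj_uv; rewrite (negbTE (v_term u uU)) addbF.
Qed.

End Sinks.

Section Counting.
Variables (R : realFieldType) (n : nat) (T : finType) (p : T -> 'rV[R]_n).

Definition nonempty_faces : {set {set T}} := [set U | is_faceb p U && (U != set0)].

Lemma sum_f_num_le k : (\sum_(i < k) f_num p i <= #|nonempty_faces|)%N.
Proof.
pose F (i : 'I_k) := [set U : {set T} | [&& is_faceb p U, U != set0 & face_dim p U == i]].
have disjF i j : i != j -> [disjoint F i & F j].
  move=> ij; rewrite -setI_eq0; apply/eqP/setP => U; rewrite !inE.
  by apply: contraNF ij => /andP[/and3P[_ _ /eqP ->] /and3P[_ _]].
rewrite (eq_bigr (fun i => \sum_(U in F i) 1)%N); last by move=> i _; rewrite sum1_card.
rewrite -partition_disjoint_bigcup // sum1_card subset_leq_card //.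
by apply/bigcupsP => i _; apply/subsetP => U; rewrite !inE => /and3P[-> ->].
Qed.

Lemma card_nonempty_faces_le (o : rel T) : orientation p o -> acyclic_or o ->
  (#|nonempty_faces| <= \sum_v sink_count p o v)%N.
Proof.
move=> hor hacyc; apply: leq_trans (card_bigcup_le _); apply: subset_leq_card.
apply/subsetP => U; rewrite inE => /andP[faceU nzU].
have [v sink_v] := exists_sink hor hacyc nzU.
by apply/bigcupP; exists v; rewrite // inE faceU.
Qed.

End Counting.

Theorem lemma2p10 (R : realFieldType) (n d : nat) (T : finType)
  (p : T -> 'rV[R]_n) (o : rel T)
  (hinj : injective p)
  (hvert : forall t : T, is_face p [set t])
  (hdim : hrank p [set: T] = d.+1)
  (hor : orientation p o) (hacyc : acyclic_or o) :
  (\sum_(v : T) sink_count p o v <= fO o)%N /\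
  (\sum_(i < d.+1) f_num p i <= \sum_(v : T) sink_count p o v)%N.
Proof.
split; first by apply: leq_sum => v _; apply: sink_count_le.
exact: leq_trans (sum_f_num_le p d.+1) (card_nonempty_faces_le hor hacyc).
Qed.
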